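(* For every positive integer $N$ and every pair of indices $\boldsymbol{k}=(k_1,\dots,k_r)$, $\boldsymbol{l}=(l_1,\dots,l_r)$ of the same depth $r\ge1$, \[ \sum_{\substack{0<m_{j,1}\le\cdots\le m_{j,l_j}<N\ (j\in[r])\\ m_{j,l_j}<m_{j+1,1}\ (j\in[r-1])}}\ \prod_{j\in[r]}\frac1{(N-m_{j,1})\cdots(N-m_{j,l_j-1})\,m_{j,l_j}^{k_j}} =\sum_{\substack{0<n_{i,1}\le\cdots\le n_{i,k_i}<N\ (i\in[r])\\ n_{i,k_i}<n_{i+1,1}\ (i\in[r-1])}}\ \prod_{i\in[r]}\frac1{(N-n_{i,1})^{l_i}\,n_{i,2}\cdots n_{i,k_i}}. \]
   Context: $[n]=\{1,\dots,n\}$. An index is a tuple of positive integers. All variables $m_{j,\cdot},n_{i,\cdot}$ range over integers; empty products equal $1$ (e.g. when $l_j=1$ the product $(N-m_{j,1})\cdots(N-m_{j,l_j-1})$ is empty, and when $k_i=1$ the product $n_{i,2}\cdots n_{i,k_i}$ is empty). *)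

From mathcomp Require Import all_boot all_order all_algebra.
Set Implicit Arguments. Unset Strict Implicit. Unset Printing Implicit Defensive.
Import Order.TTheory GRing.Theory Num.Theory.

Definition block_chain (N : nat) (bs : seq (seq nat)) : bool :=
  all (fun b => sorted leq b && all (fun x => (0 < x < N)%N) b) bs &&
  sorted (fun b c => (last 0 b < head 0 c)%N) bs.

Local Open Scope ring_scope.

Definition lhs_w (N k : nat) (b : seq nat) : rat :=
  match b with
  | [::] => 1
  | x :: s => (\prod_(y <- belast x s) (N%:R - y%:R) * (last x s)%:R ^+ k)^-1
  end.

Definition rhs_w (N l : nat) (b : seq nat) : rat :=
  match b with
  | [::] => 1
  | x :: s => ((N%:R - x%:R) ^+ l * \prod_(y <- s) y%:R)^-1
  end.

Definition chain_sum (N : nat) (sh ex : seq nat)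
  (w : nat -> nat -> seq nat -> rat) : rat :=
  \sum_(m : (sumn sh).-tuple 'I_N | block_chain N (reshape sh (map val m)))
     \prod_(p <- zip ex (reshape sh (map val m))) w N p.1 p.2.

Definition mzv_lhs (N : nat) (k l : seq nat) : rat := chain_sum N l k lhs_w.
Definition mzv_rhs (N : nat) (k l : seq nat) : rat := chain_sum N k l rhs_w.

(* Both sides are sums over weakly increasing chains in [1, N) cut into blocks,
   so they are entries of products of transfer matrices indexed by
   {0, ..., N}: a left-hand block of length l and exponent k acts by the
   kernel L(m0, m) of all such blocks lying above m0 and ending at m, a
   right-hand block by the kernel R(n, n1) of all blocks starting at n and
   ending below n1.  The connector
   C(m, n) = [m < n] binom(n - 1, m) / binom(N - 1, m) intertwines them,
   L C = C R, and this is built up one factor 1/(N - m) or 1/m at a time from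
   three telescoping identities for C.  As C(m, N) = 1 and C(0, n) = [0 < n],
   the two sides are the (0, N) entries of (L_1 ... L_r) C and C (R_1 ... R_r). *)

From mathcomp Require Import all_boot all_order all_algebra.
From mathcomp Require Import ring zify.
Set Implicit Arguments. Unset Strict Implicit. Unset Printing Implicit Defensive.
Import Order.TTheory GRing.Theory Num.Theory.
Local Open Scope ring_scope.

Lemma natb_mulr_eq (R : pzSemiRingType) (b : bool) (x y : R) :
  (b -> x = y) -> b%:R * x = b%:R * y.
Proof. by case: b => [->|_]; rewrite ?mul0r. Qed.

Lemma sum_ord_indicator (R : pzSemiRingType) n p q (F : nat -> R) : (q <= n)%N ->
  \sum_(m < n) ((p <= m) && (m < q))%N%:R * F m = \sum_(p <= m < q) F m.
Proof.
move=> le_qn; rewrite (@big_nat_widenl _ _ _ p 0) // (@big_nat_widen _ _ _ 0 q n) //.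
rewrite big_mkord [RHS]big_mkcond; apply: eq_bigr => i _ /=.
by case: ((p <= i) && (i < q))%N; rewrite ?mul1r ?mul0r.
Qed.

Lemma natr_mul_bin_pred (R : pzRingType) m n : (0 < m)%N -> (0 < n)%N ->
  m%:R * 'C(n.-1, m)%:R = (n%:R - m%:R) * 'C(n.-1, m.-1)%:R :> R.
Proof.
case: m n => [|m] [|n] //= _ _; case: (leqP m n) => [le_mn|lt_nm].
  by rewrite -natrB // -!natrM mul_bin_left subSS.
by rewrite (bin_small lt_nm) bin_small ?mulr0 // ltnW.
Qed.

Lemma prod_zip_nseq (R : pzSemiRingType) (f : nat -> R) (u : seq nat) :
  \prod_(q <- zip (nseq (size u) f) u) q.1 q.2 = \prod_(y <- u) f y.
Proof. by elim: u => [|y u IH]; rewrite ?big_nil //= !big_cons IH. Qed.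

Lemma sum_tuple_cons (V : nmodType) N n (F : seq nat -> V) :
  \sum_(t : n.+1.-tuple 'I_N) F (map val t) =
  \sum_(x : 'I_N) \sum_(t : n.-tuple 'I_N) F (val x :: map val t).
Proof.
rewrite pair_big /= (reindex (fun xt : 'I_N * n.-tuple 'I_N => [tuple of xt.1 :: xt.2])) /=.
  by apply: eq_bigr => -[x t] _.
exists (fun t : n.+1.-tuple 'I_N => (thead t, [tuple of behead t])).
  by move=> [x t] _ /=; rewrite theadE; congr pair; apply: val_inj.
by move=> t _ /=; rewrite [RHS]tuple_eta; apply: val_inj.
Qed.

Lemma zip_swap (S T : Type) (s : seq S) (t : seq T) :
  zip t s = [seq (q.2, q.1) | q <- zip s t].
Proof. by elim: s t => [|x s IH] [|y t] //=; rewrite IH. Qed.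

Lemma all_zip_gt0 (s t : seq nat) : all (fun x => 0 < x)%N s -> all (fun x => 0 < x)%N t ->
  all (fun q => (0 < q.1) && (0 < q.2))%N (zip s t).
Proof.
elim: s t => [|x s IH] [|y t] //= /andP[x_gt0 s_gt0] /andP[y_gt0 t_gt0].
by rewrite x_gt0 y_gt0 IH.
Qed.

Section Connector.
Variables (R : numFieldType) (N : nat).

(** * The connector *)

Definition invNm (m : nat) : R := (N%:R - m%:R)^-1.
Definition invm (m : nat) : R := (m%:R)^-1.

Definition connector (m n : nat) : R :=
  (m < n)%N%:R * ('C(n.-1, m)%:R / 'C(N.-1, m)%:R).

Lemma connector_eq0 m n : (n <= m)%N -> connector m n = 0.
Proof. by rewrite /connector ltnNge => ->; rewrite mul0r. Qed.

Lemma connectorE m n : (0 < n)%N ->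
  connector m n = 'C(n.-1, m)%:R / 'C(N.-1, m)%:R.
Proof.
move=> n_gt0; rewrite /connector; case: ltnP => [_|le_nm]; first by rewrite mul1r.
by rewrite bin_small ?mul0r //; lia.
Qed.

Lemma connector0n n : connector 0 n = (0 < n)%N%:R.
Proof. by rewrite /connector !bin0 divr1 mulr1. Qed.

Lemma natr_bin_neq0 m : (m < N)%N -> 'C(N.-1, m)%:R != 0 :> R.
Proof. by move=> lt_mN; rewrite pnatr_eq0 -lt0n bin_gt0; lia. Qed.

Lemma connector_mN m : (m < N)%N -> connector m N = 1.
Proof. by move=> lt_mN; rewrite connectorE ?divff ?natr_bin_neq0 //; lia. Qed.

Definition step (m n : nat) : R := invNm m * connector m.-1 n.

Section Recurrences.
Variable m : nat.
Hypotheses (m_gt0 : (0 < m)%N) (lt_mN : (m < N)%N).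

Let m_neq0 : m%:R != 0 :> R. Proof. by rewrite pnatr_eq0 -lt0n. Qed.
Let Nm_neq0 : N%:R - m%:R != 0 :> R. Proof. by rewrite subr_eq0 eqr_nat; lia. Qed.

Let natr_binN : 'C(N.-1, m)%:R = (N%:R - m%:R) * 'C(N.-1, m.-1)%:R / m%:R :> R.
Proof.
have N_gt0 : (0 < N)%N by lia.
by rewrite -natr_mul_bin_pred // mulrAC divff ?mul1r.
Qed.

Lemma mulNm_connector n :
  (N%:R - m%:R) * connector m n = (n%:R - m%:R) * connector m.-1 n.
Proof.
case: n => [|n]; first by rewrite !connector_eq0 ?mulr0.
have natr_bin : 'C(n, m)%:R = (n.+1%:R - m%:R) * 'C(n, m.-1)%:R / m%:R :> R.
  by rewrite -[n in 'C(n, _)]/(n.+1.-1) -natr_mul_bin_pred // mulrAC divff ?mul1r.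
rewrite !connectorE // natr_bin natr_binN; field.
by rewrite Nm_neq0 m_neq0 natr_bin_neq0 // (leq_ltn_trans (leq_pred m)).
Qed.

Lemma mulNm_connectorS n :
  (N%:R - m%:R) * connector m n.+1 = n%:R * connector m.-1 n.
Proof.
case: n => [|n]; first by rewrite !connector_eq0 ?mulr0 ?mul0r.
have natr_bin : 'C(n.+1, m)%:R = n.+1%:R * 'C(n, m.-1)%:R / m%:R :> R.
  by rewrite -natrM mul_bin_diag prednK // natrM mulrAC divff ?mul1r.
rewrite !connectorE // natr_bin natr_binN; field.
by rewrite Nm_neq0 m_neq0 natr_bin_neq0 // (leq_ltn_trans (leq_pred m)).
Qed.

Let connector_div n :
  connector m n = (n%:R - m%:R) * connector m.-1 n / (N%:R - m%:R).
Proof. by rewrite -mulNm_connector mulrC mulKf. Qed.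

Let connectorS_div n :
  connector m n.+1 = n%:R * connector m.-1 n / (N%:R - m%:R).
Proof. by rewrite -mulNm_connectorS mulrC mulKf. Qed.

Lemma step_left n : (m <= n < N)%N ->
  step m n = invNm n * (connector m.-1 n - connector m n).
Proof.
move=> mnN; have Nn_neq0 : N%:R - n%:R != 0 :> R by rewrite subr_eq0 eqr_nat; lia.
by rewrite /step /invNm connector_div; field; rewrite Nn_neq0 Nm_neq0.
Qed.

Lemma step_right n : step m n = invm m * (connector m n.+1 - connector m n).
Proof.
by rewrite /step /invNm /invm connectorS_div connector_div; field;
  rewrite Nm_neq0 m_neq0.
Qed.

Lemma step_shift n : step m n = invm n * connector m n.+1.
Proof.
case: n => [|n]; first by rewrite /step /invm invr0 connector_eq0 ?mulr0 ?mul0r.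
by rewrite /step /invNm /invm connectorS_div; field; rewrite Nm_neq0 nat1r pnatr_eq0.
Qed.

End Recurrences.

Lemma sum_step_left p n : (0 < p)%N -> (n < N)%N ->
  \sum_(m < N.+1) ((p <= m) && (m < N))%N%:R * step m n = invNm n * connector p.-1 n.
Proof.
move=> p_gt0 lt_nN.
have -> : \sum_(m < N.+1) ((p <= m) && (m < N))%N%:R * step m n =
          \sum_(m < N.+1) ((p <= m) && (m < n.+1))%N%:R * step m n.
  apply: eq_bigr => m _; case: (ltnP n m) => [lt_nm|le_mn].
    by rewrite /step connector_eq0 ?mulr0 //; lia.
  by rewrite ltnS le_mn (leq_ltn_trans le_mn lt_nN).
rewrite (@sum_ord_indicator _ _ p n.+1 (step^~ n)) ?ltnS 1?ltnW //.
case: (leqP p n.+1) => [le_pn|lt_np]; last first.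
  by rewrite big_geq ?connector_eq0 ?mulr0 //; lia.
rewrite (telescope_sumr_eq (fun m => - (invNm n * connector m.-1 n))) //=.
  by rewrite connector_eq0 // mulr0 oppr0 sub0r opprK.
by move=> m /andP[le_pm lt_mn]; rewrite step_left; [ring|lia..].
Qed.

Lemma sum_step_right m n' : (0 < m)%N -> (m < N)%N -> (n' <= N)%N ->
  \sum_(n < N.+1) (n <= n')%N%:R * step m n = invm m * connector m n'.+1.
Proof.
move=> m_gt0 lt_mN le_n'N.
have -> : \sum_(n < N.+1) (n <= n')%N%:R * step m n =
          \sum_(n < N.+1) ((m <= n) && (n < n'.+1))%N%:R * step m n.
  apply: eq_bigr => n _; case: (ltnP n m) => [lt_nm|le_mn].
    by rewrite /step connector_eq0 ?mulr0 //; lia.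
  by rewrite ltnS.
rewrite (@sum_ord_indicator _ _ m n'.+1 (step m)) ?ltnS //.
case: (leqP m n'.+1) => [le_mn'|lt_n'm]; last first.
  by rewrite big_geq ?connector_eq0 ?mulr0 //; lia.
rewrite (telescope_sumr_eq (fun n => invm m * connector m n)) //=.
  by rewrite (connector_eq0 (leqnn m)) mulr0 subr0.
by move=> n _; rewrite step_right // mulrBr.
Qed.

(** * Transfer kernels *)

(* [invNm_chain i p m] sums [1 / ((N - m_1) ... (N - m_i))] over
   [p <= m_1 <= ... <= m_i <= m < N], and [invm_chain j n n1] sums
   [1 / (n_1 ... n_j)] over [n <= n_1 <= ... <= n_j < n1] with all [n_t < N]. *)
Fixpoint invNm_chain (i p m : nat) : R :=
  if i is i'.+1 then
    \sum_(m' < N.+1) ((p <= m') && (m' < N))%N%:R * (invNm m' * invNm_chain i' m' m)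
  else ((p <= m) && (m < N))%N%:R.

Fixpoint invm_chain (j n n1 : nat) : R :=
  if j is j'.+1 then
    \sum_(n' < N.+1) ((n <= n') && (n' < N))%N%:R * (invm n' * invm_chain j' n' n1)
  else (n < n1)%N%:R.

Lemma invNm_chain_eq0 i p m : ~~ ((p <= m) && (m < N))%N -> invNm_chain i p m = 0.
Proof.
elim: i p => [|i IH] p not_pmN /=; first by rewrite (negPf not_pmN).
apply: big1 => m' _; have [pm'N|_] := boolP ((p <= m') && (m' < N))%N; last first.
  by rewrite mul0r.
by rewrite IH ?mulr0 //; apply: contra not_pmN; lia.
Qed.

Lemma invm_chain_N j n1 : (n1 <= N)%N -> invm_chain j N n1 = 0.
Proof.
case: j => [|j] le_n1N /=; first by rewrite ltnNge le_n1N.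
apply: big1 => n _; suff /negPf-> : ~~ ((N <= n) && (n < N))%N by rewrite mul0r.
by lia.
Qed.

Lemma sum_invNm_chain_step i p n : (0 < p)%N -> (n < N)%N ->
  \sum_(m < N.+1) invNm_chain i p m * step m n = invNm n ^+ i.+1 * connector p.-1 n.
Proof.
elim: i p => [|i IH] p p_gt0 lt_nN; first by rewrite expr1 -sum_step_left.
rewrite /=; under eq_bigr do rewrite mulr_suml; rewrite exchange_big /=.
rewrite (eq_bigr (fun m' : 'I_N.+1 =>
    invNm n ^+ i.+1 * (((p <= m') && (m' < N))%N%:R * step m' n))).
  by rewrite -mulr_sumr sum_step_left // mulrA -exprSr.
move=> m' _; under eq_bigr do rewrite -!mulrA; rewrite -mulr_sumr mulrCA.
apply: natb_mulr_eq => /andP[le_pm' lt_m'N]; rewrite -mulr_sumr IH //; last by lia.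
by rewrite /step; ring.
Qed.

Lemma step_invm_chain j m n1 : (0 < m)%N -> (m < N)%N -> (n1 <= N)%N ->
  invm m ^+ j.+1 * connector m n1 = \sum_(n < N.+1) step m n * invm_chain j n n1.
Proof.
move=> m_gt0 lt_mN le_n1N; elim: j => [|j IH].
  case: n1 le_n1N => [|n1] le_n1N.
    by rewrite connector_eq0 // mulr0 big1 // => n _; rewrite mulr0.
  rewrite expr1 -sum_step_right //; last exact: ltnW.
  by apply: eq_bigr => n _; rewrite /= mulrC ltnS.
rewrite exprS -mulrA IH mulr_sumr /=; under [RHS]eq_bigr do rewrite mulr_sumr.
rewrite [RHS]exchange_big /=; apply: eq_bigr => n' _; case: (ltnP n' N) => [lt_n'N|le_Nn'].
  under eq_bigr do rewrite andbT mulrCA mulrA.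
  by rewrite -mulr_suml sum_step_right ?step_shift //; [ring|lia].
have -> : (n' : nat) = N by have := ltn_ord n'; lia.
by rewrite invm_chain_N // !mulr0 big1 // => n _; rewrite andbF mul0r mulr0.
Qed.

(* [lhs_kernel l k m0 m] weighs the left-hand blocks of length [l] and
   exponent [k] with entries in (m0, N) and last entry [m]; [rhs_kernel l k n n1]
   weighs the right-hand blocks of length [k] and exponent [l] with first entry
   [n < N] and last entry below [n1]. *)
Definition lhs_kernel (l k m0 m : nat) : R := invNm_chain l.-1 m0.+1 m * invm m ^+ k.
Definition rhs_kernel (l k n n1 : nat) : R :=
  (n < N)%N%:R * invNm n ^+ l * invm_chain k.-1 n n1.

Lemma lhs_kernel_connector l k m0 n1 : (0 < l)%N -> (0 < k)%N -> (n1 <= N)%N ->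
  \sum_(m < N.+1) lhs_kernel l k m0 m * connector m n1 =
  \sum_(n < N.+1) connector m0 n * rhs_kernel l k n n1.
Proof.
case: l k => [|i] [|j] // _ _ le_n1N; rewrite /lhs_kernel /rhs_kernel /=.
transitivity (\sum_(m < N.+1) \sum_(n < N.+1)
                 invNm_chain i m0.+1 m * step m n * invm_chain j n n1).
  apply: eq_bigr => m _; case: (boolP ((m0 < m) && (m < N))%N) => [mN|not_mN].
    rewrite -mulrA step_invm_chain ?mulr_sumr; try lia.
    by apply: eq_bigr => n _; rewrite mulrA.
  by rewrite invNm_chain_eq0 // !mul0r big1 // => n _; rewrite !mul0r.
rewrite exchange_big /=; apply: eq_bigr => n _; rewrite -mulr_suml.
case: (ltnP n N) => [lt_nN|le_Nn]; first by rewrite sum_invNm_chain_step //=; ring.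
have -> : (n : nat) = N by have := ltn_ord n; lia.
by rewrite invm_chain_N // !mulr0.
Qed.

Definition kernel_mx (f : nat -> nat -> R) : 'M[R]_N.+1 := \matrix_(i, j) f i j.
Definition connector_mx := kernel_mx connector.
Definition lhs_mx (q : nat * nat) := kernel_mx (lhs_kernel q.1 q.2).
Definition rhs_mx (q : nat * nat) := kernel_mx (rhs_kernel q.1 q.2).
Definition lhs_mxs (qs : seq (nat * nat)) := foldr (fun q M => lhs_mx q *m M) 1%:M qs.
Definition rhs_mxs (qs : seq (nat * nat)) := foldr (fun q M => rhs_mx q *m M) 1%:M qs.

Lemma lhs_mx_connector q : (0 < q.1)%N -> (0 < q.2)%N ->
  lhs_mx q *m connector_mx = connector_mx *m rhs_mx q.
Proof.
move=> l_gt0 k_gt0; apply/matrixP => i j; rewrite !mxE.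
under eq_bigr do rewrite !mxE; under [RHS]eq_bigr do rewrite !mxE.
by rewrite lhs_kernel_connector // -ltnS.
Qed.

Lemma lhs_mxs_connector qs : all (fun q => (0 < q.1) && (0 < q.2))%N qs ->
  lhs_mxs qs *m connector_mx = connector_mx *m rhs_mxs qs.
Proof.
elim: qs => [|q qs IH] /=; first by rewrite mul1mx mulmx1.
case/andP=> /andP[l_gt0 k_gt0] qs_gt0.
by rewrite -mulmxA IH // !mulmxA lhs_mx_connector.
Qed.

(** * Nested sums over chains *)

(* A slot [(w, strict)] carries the weight [w] of one entry of a chain and
   records whether the next entry must be strictly larger (the entry ends a
   block) or merely not smaller. *)
Definition slot := ((nat -> R) * bool)%type.

Fixpoint block_slots (ws : seq (nat -> R)) : seq slot :=
  if ws is w :: ws' then (w, nilp ws') :: block_slots ws' else [::].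

Fixpoint nested_sum (D : seq slot) (p : nat) : R :=
  if D is d :: D' then
    \sum_(m < N.+1)
      ((p <= m) && (m < N))%N%:R * (d.1 m * nested_sum D' (if d.2 then m.+1 else m))
  else 1.

(* The part of [nested_sum D] whose first entry is [n]; an empty chain is
   pinned at the sentinel [N]. *)
Definition nested_sum_from (D : seq slot) (n : nat) : R :=
  if D is d :: D' then (n < N)%N%:R * (d.1 n * nested_sum D' (if d.2 then n.+1 else n))
  else (n == N)%:R.

Lemma size_block_slots ws : size (block_slots ws) = size ws.
Proof. by elim: ws => //= w ws ->. Qed.

Lemma nested_sumE D p : (p <= N)%N ->
  nested_sum D p = \sum_(n < N.+1) (p <= n)%N%:R * nested_sum_from D n.
Proof.
move=> le_pN; case: D => [|d D] /=; last first.
  by apply: eq_bigr => n _; rewrite -mulnb natrM -mulrA.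
rewrite big_ord_recr /= big1 ?add0r ?le_pN ?eqxx ?mulr1 // => n _.
by rewrite ltn_eqF ?mulr0.
Qed.

Definition lhs_weights (l k : nat) : seq (nat -> R) :=
  nseq l.-1 invNm ++ [:: fun m => invm m ^+ k].
Definition rhs_weights (k l : nat) : seq (nat -> R) :=
  (fun n => invNm n ^+ l) :: nseq k.-1 invm.

Lemma size_lhs_weights l k : (0 < l)%N -> size (lhs_weights l k) = l.
Proof. by case: l => // l _; rewrite size_cat size_nseq addn1. Qed.

Lemma size_rhs_weights k l : (0 < k)%N -> size (rhs_weights k l) = k.
Proof. by case: k => // k _; rewrite /= size_nseq. Qed.

Lemma nested_sum_lhs_block l k D p : (0 < l)%N ->
  nested_sum (block_slots (lhs_weights l k) ++ D) p =
  \sum_(m < N.+1) invNm_chain l.-1 p m * (invm m ^+ k * nested_sum D m.+1).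
Proof.
case: l => // i _; rewrite /lhs_weights /=; elim: i p => [|i IH] p //=.
rewrite /nilp size_cat size_nseq addn1 /=; under eq_bigr do rewrite IH !mulr_sumr.
rewrite exchange_big /=; apply: eq_bigr => m _; rewrite mulr_suml.
by apply: eq_bigr => m' _; rewrite !mulrA.
Qed.

Lemma nested_sum_invm_block j D n : (n < N)%N ->
  nested_sum (block_slots (nseq j invm) ++ D) (if j == 0%N then n.+1 else n) =
  \sum_(n1 < N.+1) invm_chain j n n1 * nested_sum_from D n1.
Proof.
elim: j n => [|j IH] n lt_nN.
  by rewrite /= nested_sumE //; apply: eq_bigr => n1 _; rewrite ltnS.
rewrite /= /nilp size_nseq (eq_bigr (fun n' : 'I_N.+1 => \sum_(n1 < N.+1)
    ((n <= n') && (n' < N))%N%:R * (invm n' * invm_chain j n' n1) * nested_sum_from D n1)).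
  by rewrite exchange_big; apply: eq_bigr => n1 _; rewrite /= mulr_suml.
move=> n' _; under eq_bigr do rewrite -mulrA; rewrite -mulr_sumr.
apply: natb_mulr_eq => /andP[_ lt_n'N].
by rewrite IH // mulr_sumr; apply: eq_bigr => n1 _; rewrite mulrA.
Qed.

Lemma nested_sum_from_rhs_block k l D n : (0 < k)%N -> (n <= N)%N ->
  nested_sum_from (block_slots (rhs_weights k l) ++ D) n =
  \sum_(n1 < N.+1) rhs_kernel l k n n1 * nested_sum_from D n1.
Proof.
case: k => // j _ le_nN; rewrite /rhs_kernel /= /nilp size_nseq.
case: (ltnP n N) => [lt_nN|_]; last by rewrite !mul0r big1 // => n1 _; rewrite !mul0r.
by rewrite nested_sum_invm_block // !mulr_sumr; apply: eq_bigr => n1 _; rewrite /=; ring.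
Qed.

Lemma nested_sum_lhs_blocks qs m0 :
  all (fun q => (0 < q.1) && (0 < q.2))%N qs -> (m0 < N)%N ->
  nested_sum (flatten [seq block_slots (lhs_weights q.1 q.2) | q <- qs]) m0.+1 =
  (lhs_mxs qs *m connector_mx) (inord m0) ord_max.
Proof.
elim: qs m0 => [|[l k] qs IH] m0 /=.
  by move=> _ lt_m0N; rewrite mul1mx mxE inordK ?connector_mN //; lia.
case/andP=> /andP[l_gt0 k_gt0] qs_gt0 lt_m0N.
rewrite nested_sum_lhs_block // -mulmxA mxE; apply: eq_bigr => m _.
rewrite mxE inordK; last by lia.
rewrite /lhs_kernel -mulrA; case: (ltnP m N) => [lt_mN|le_Nm].
  by rewrite IH // inord_val.
by rewrite invNm_chain_eq0 ?mul0r //; lia.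
Qed.

Lemma nested_sum_from_rhs_blocks qs n :
  all (fun q => (0 < q.1) && (0 < q.2))%N qs -> (n <= N)%N ->
  nested_sum_from (flatten [seq block_slots (rhs_weights q.2 q.1) | q <- qs]) n =
  rhs_mxs qs (inord n) ord_max.
Proof.
elim: qs n => [|[l k] qs IH] n.
  by move=> _ le_nN; rewrite mxE -val_eqE /= inordK.
case/andP=> /andP[l_gt0 k_gt0] qs_gt0 le_nN.
rewrite -[flatten _]/(block_slots (rhs_weights k l) ++ _).
rewrite nested_sum_from_rhs_block // mxE; apply: eq_bigr => n1 _.
by rewrite mxE inordK // IH ?inord_val // -ltnS.
Qed.

Fixpoint slot_chain (D : seq slot) (p : nat) (s : seq nat) : bool :=
  match D, s with
  | [::], [::] => true
  | d :: D', x :: s' => (p <= x)%N && slot_chain D' (if d.2 then x.+1 else x) s'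
  | _, _ => false
  end.

Definition slot_weight (D : seq slot) (s : seq nat) : R := \prod_(q <- zip D s) q.1.1 q.2.

Lemma sum_tuple_slots n D p : size D = n ->
  \sum_(t : n.-tuple 'I_N) (slot_chain D p (map val t))%:R * slot_weight D (map val t) =
  nested_sum D p.
Proof.
move=> <-; elim: D p => [|d D IH] p.
  rewrite /= (big_pred1 [tuple]) => [|t]; last exact/esym/eqP/tuple0.
  by rewrite /slot_weight big_nil mulr1.
rewrite (@sum_tuple_cons _ N _
  (fun s => (slot_chain (d :: D) p s)%:R * slot_weight (d :: D) s)).
rewrite /= big_ord_recr /= ltnn andbF mul0r addr0.
apply: eq_bigr => x _ /=; rewrite ltn_ord andbT -IH !mulr_sumr.
by apply: eq_bigr => t _; rewrite /slot_weight /= big_cons -mulnb natrM; ring.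
Qed.

Lemma slot_chain_block ws D p b s : size ws = size b -> (0 < size b)%N ->
  slot_chain (block_slots ws ++ D) p (b ++ s) =
  [&& p <= head 0 b, sorted leq b & slot_chain D (last 0 b).+1 s]%N.
Proof.
elim: ws p b => [|w ws IH] p [|x b] // [size_ws] _.
case: ws b IH size_ws => [|w' ws] [|y b] // IH [size_ws].
rewrite -[LHS]/((p <= x) && slot_chain (block_slots (w' :: ws) ++ D) x ((y :: b) ++ s))%N.
rewrite IH //=; last by rewrite size_ws.
by rewrite -andbA.
Qed.

Lemma slot_weight_cat D1 D2 s1 s2 : size D1 = size s1 ->
  slot_weight (D1 ++ D2) (s1 ++ s2) = slot_weight D1 s1 * slot_weight D2 s2.
Proof. by move=> size_D1; rewrite /slot_weight zip_cat // big_cat. Qed.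

Lemma slot_weight_block ws b :
  slot_weight (block_slots ws) b = \prod_(q <- zip ws b) q.1 q.2.
Proof.
rewrite /slot_weight; elim: ws b => [|w ws IH] [|x b]; rewrite /= ?big_nil //.
by rewrite !big_cons IH.
Qed.

Lemma sorted_block_in_range x b : (0 < x)%N -> all (fun y => y < N)%N (x :: b) ->
  sorted leq (x :: b) -> all (fun y => 0 < y < N)%N (x :: b).
Proof.
move=> x_gt0 /allP ltN /(order_path_min leq_trans) /allP le_x.
apply/allP => y y_in; rewrite ltN // andbT.
by move: y_in; rewrite inE => /predU1P[->|/le_x/(leq_trans x_gt0)].
Qed.

Lemma block_chain_head_gt0 bs : block_chain N bs -> all (fun b => 0 < size b)%N bs ->
  (if bs is b :: _ then 0 < head 0 b else true)%N.
Proof.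
by case: bs => [|[|x b] bs] // /andP[/andP[/andP[_ /andP[/andP[x_gt0 _] _]] _] _].
Qed.

Section SlotsOf.
Variable mk : nat -> nat -> seq (nat -> R).
Hypothesis size_mk : forall n e, (0 < n)%N -> size (mk n e) = n.

Definition slots_of (sh ex : seq nat) : seq slot :=
  flatten [seq block_slots (mk q.1 q.2) | q <- zip sh ex].

Lemma size_slots_of sh ex : size sh = size ex -> all (fun x => 0 < x)%N sh ->
  size (slots_of sh ex) = sumn sh.
Proof.
rewrite /slots_of size_flatten /shape -map_comp.
elim: sh ex => [|x sh IH] [|e ex] //= [size_sh] /andP[x_gt0 sh_gt0].
by rewrite size_block_slots size_mk // IH.
Qed.

Lemma block_chain_slots bs ex p :
  size ex = size bs -> all (fun b => 0 < size b)%N bs ->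
  all (fun x => x < N)%N (flatten bs) -> (0 < p)%N ->
  (block_chain N bs && (if bs is b :: _ then p <= head 0 b else true)%N) =
  slot_chain (slots_of (shape bs) ex) p (flatten bs).
Proof.
elim: bs ex p => [|b bs IH] [|e ex] p //= [size_ex] /andP[b_gt0 bs_gt0].
rewrite all_cat => /andP[bN bsN] p_gt0.
rewrite slot_chain_block ?size_mk // -IH //.
case: b b_gt0 bN => // x b _ bN /=; rewrite /block_chain /=.
case: (leqP p x) => [le_px|]; last by rewrite !andbF.
case sorted_b: (path leq x b); last by rewrite !andbF.
have := sorted_block_in_range (leq_trans p_gt0 le_px) bN; rewrite /= sorted_b => ->//=.
case: bs {IH size_ex bs_gt0 bsN} => [|c bs] //=; rewrite andbT.
by case: (last x b < head 0 c)%N; rewrite /= ?andbT ?andbF.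
Qed.

Lemma prod_slot_weight (W : nat -> seq nat -> R) :
  (forall e b, (0 < size b)%N -> W e b = \prod_(q <- zip (mk (size b) e) b) q.1 q.2) ->
  forall bs ex, size ex = size bs -> all (fun b => 0 < size b)%N bs ->
  \prod_(q <- zip ex bs) W q.1 q.2 = slot_weight (slots_of (shape bs) ex) (flatten bs).
Proof.
move=> W_prod; elim=> [|b bs IH] [|e ex] //=.
  by rewrite big_nil /slots_of /slot_weight /= big_nil.
move=> [size_ex] /andP[b_gt0 bs_gt0].
rewrite big_cons /slots_of /= slot_weight_cat ?size_block_slots ?size_mk //.
by rewrite slot_weight_block -W_prod // IH.
Qed.

End SlotsOf.

End Connector.

Lemma lhs_w_prod N k b : (0 < size b)%N ->
  lhs_w N k b = \prod_(q <- zip (lhs_weights rat N (size b) k) b) q.1 q.2.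
Proof.
case: b => // x s _; rewrite /lhs_w /lhs_weights [size _]/= [_.+1.-1]/=.
have -> : zip (nseq (size s) (invNm rat N) ++ [:: fun m => invm rat m ^+ k]) (x :: s) =
    zip (nseq (size (belast x s)) (invNm rat N)) (belast x s) ++
    [:: (fun m => invm rat m ^+ k, last x s)].
  by rewrite (lastI x s) -cats1 zip_cat ?size_nseq ?size_belast.
rewrite big_cat /= big_cons big_nil mulr1 prod_zip_nseq.
by rewrite invfM -prodfV /invNm /invm /= exprVn.
Qed.

Lemma rhs_w_prod N l b : (0 < size b)%N ->
  rhs_w N l b = \prod_(q <- zip (rhs_weights rat N (size b) l) b) q.1 q.2.
Proof.
case: b => // x s _; rewrite /rhs_w /rhs_weights /= big_cons prod_zip_nseq.
by rewrite invfM -prodfV /invNm /invm /= exprVn.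
Qed.

Lemma chain_sum_nested N (mk : nat -> nat -> seq (nat -> rat))
    (w : nat -> nat -> seq nat -> rat) :
  (forall n e, (0 < n)%N -> size (mk n e) = n) ->
  (forall e b, (0 < size b)%N -> w N e b = \prod_(q <- zip (mk (size b) e) b) q.1 q.2) ->
  forall sh ex, size sh = size ex -> all (fun x => 0 < x)%N sh ->
  chain_sum N sh ex w = nested_sum N (slots_of mk sh ex) 1.
Proof.
move=> size_mk w_prod sh ex size_sh sh_gt0.
rewrite -(sum_tuple_slots _ _ (size_slots_of size_mk size_sh sh_gt0)) /chain_sum big_mkcond.
apply: eq_bigr => t _; set s := map val t.
have size_s : size s = sumn sh by rewrite size_map size_tuple.
have sN : all (fun x => x < N)%N s by apply/allP => _ /mapP[z _ ->]; exact: ltn_ord.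
set bs := reshape sh s.
have shape_bs : shape bs = sh by rewrite reshapeKl // size_s.
have flatten_bs : flatten bs = s by rewrite reshapeKr // size_s.
have bs_gt0 : all (fun b => 0 < size b)%N bs by rewrite -all_map -/(shape bs) shape_bs.
have size_ex : size ex = size bs by rewrite size_reshape size_sh.
have -> : block_chain N bs = slot_chain (slots_of mk sh ex) 1 s.
  rewrite -shape_bs -flatten_bs -(@block_chain_slots _ N _ size_mk) ?flatten_bs //.
  by rewrite andb_idr // => /block_chain_head_gt0; apply.
rewrite (prod_slot_weight size_mk w_prod size_ex bs_gt0) shape_bs flatten_bs.
by case: slot_chain; rewrite ?mul1r ?mul0r.
Qed.

Theorem mainTheorem12 (N : nat) (k l : seq nat) :
  (0 < N)%N -> (0 < size k)%N -> size k = size l ->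
  all (fun x => 0 < x)%N k -> all (fun x => 0 < x)%N l ->
  mzv_lhs N k l = mzv_rhs N k l.
Proof.
move=> N_gt0 _ size_kl k_gt0 l_gt0; have qs_gt0 := all_zip_gt0 l_gt0 k_gt0.
rewrite /mzv_lhs /mzv_rhs.
rewrite (chain_sum_nested (@size_lhs_weights rat N) (@lhs_w_prod N)) ?size_kl //.
rewrite (chain_sum_nested (@size_rhs_weights rat N) (@rhs_w_prod N)) //.
rewrite /slots_of (zip_swap l k) -map_comp.
rewrite nested_sum_lhs_blocks // lhs_mxs_connector // nested_sumE // mxE.
apply: eq_bigr => n _; rewrite mxE inordK // connector0n.
by rewrite nested_sum_from_rhs_blocks ?inord_val // -ltnS.
Qed.
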